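(* Assume there is a measure $\lambda$ on $\mathcal{X}$ with $T(\cdot\mid x)\ll\lambda$ for every $x$, with densities $t(\cdot\mid x)=dT(\cdot\mid x)/d\lambda$ forming a uniformly bounded, equicontinuous family (for every $x'\in\mathcal{X}$ and $\epsilon>0$ there is $\delta>0$ such that $d(y,x')<\delta$ implies $|t(y\mid x)-t(x'\mid x)|<\epsilon$ for all $x$). Let $\mu,\nu$ be priors and let $f_{n-}^\mu$, $f_{n-}^\nu$ denote the densities of $\pi_{n-}^\mu$, $\pi_{n-}^\nu$ with respect to $\lambda$. Fix any sequence of measurements $y_{[0,\infty)}$. Then the collections $\mathscr{F}^\mu=\{f_{n-}^\mu: n\in\mathbb{N}\}$ and $\mathscr{F}^\nu=\{f_{n-}^\nu:n\in\mathbb{N}\}$ are uniformly bounded, equicontinuous families.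
   Context: Setting: $\mathcal{X},\mathcal{Y},\mathcal{Z}$ are Polish spaces, $d$ the metric on $\mathcal{X}$. $T$ is a transition kernel on $\mathcal{X}$; $\{Z_n\}$ i.i.d. with law $Q$ independent of the states; $h:\mathcal{X}\times\mathcal{Z}\to\mathcal{Y}$ measurable; $X_0\sim\mu$, $Y_n=h(X_n,Z_n)$; $P^\mu$ the joint law. Predictor $\pi_{n-}^{\mu}=P^{\mu}(X_n\in\cdot\mid Y_0,\dots,Y_{n-1})$, evaluated along the fixed measurement sequence; the predictors are absolutely continuous with respect to $\lambda$ for $n\ge1$. *)

From HB Require Import structures.
From mathcomp Require Import all_boot all_order all_algebra.
From mathcomp Require Import all_classical all_reals all_analysis.
Set Implicit Arguments. Unset Strict Implicit. Unset Printing Implicit Defensive.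
Import Order.TTheory GRing.Theory Num.Theory.
Local Open Scope classical_set_scope.
Local Open Scope ring_scope.

Definition is_metric (R : realType) (X : Type) (dist : X -> X -> R) : Prop :=
  [/\ (forall x y, 0 <= dist x y),
      (forall x y, dist x y = 0 <-> x = y),
      (forall x y, dist x y = dist y x) &
      (forall x y z, dist x z <= dist x y + dist y z)].

Definition dball (R : realType) (X : Type) (dist : X -> X -> R) (x : X) (r : R)
  : set X := [set z | dist x z < r].

(* (X, dist) is a Polish metric space (complete, separable) and the
   measurable sets of X are exactly its Borel sets (the sigma-algebra
   generated by the open balls, which for a separable metric space is the
   Borel sigma-algebra). *)
Definition polish_borel (d : measure_display) (R : realType)
  (X : measurableType d) (dist : X -> X -> R) : Prop :=
  [/\ is_metric dist,
      (forall u : nat -> X,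
         (forall e : R, 0 < e -> exists N, forall m n, (N <= m)%N -> (N <= n)%N ->
                 dist (u m) (u n) < e) ->
         exists l, forall e : R, 0 < e -> exists N, forall n, (N <= n)%N ->
                 dist (u n) l < e),
      (exists s : nat -> X, forall x (e : R), 0 < e -> exists n, dist x (s n) < e) &
      (forall A : set X, measurable A <->
         <<s [set B | exists x r, B = dball dist x r] >> A)].

(* Transition kernel T with densities t(. | x) = dT(. | x)/d lambda:
   t y x stands for t(y | x). *)
Definition kernel_density (d : measure_display) (R : realType)
  (X : measurableType d) (lam : {measure set X -> \bar R})
  (T : R.-pker X ~> X) (t : X -> X -> R) : Prop :=
  forall x, [/\ measurable_fun setT (fun y => t y x),
                (forall y, 0 <= t y x) &
                (forall A, measurable A -> T x A = (\int[lam]_(y in A) (t y x)%:E)%E)].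

Definition is_density (d : measure_display) (R : realType)
  (X : measurableType d) (lam : {measure set X -> \bar R})
  (p : probability X R) (f : X -> R) : Prop :=
  [/\ measurable_fun setT f, (forall y, 0 <= f y) &
      (forall A, measurable A -> p A = (\int[lam]_(y in A) (f y)%:E)%E)].

Definition unif_bounded (R : realType) (I X : Type) (F : I -> X -> R) : Prop :=
  exists M : R, forall i y, `|F i y| <= M.

Definition equicont (R : realType) (I X : Type) (dist : X -> X -> R)
  (F : I -> X -> R) : Prop :=
  forall (x' : X) (e : R), 0 < e -> exists2 delta : R, 0 < delta &
    forall y, dist y x' < delta -> forall i, `|F i y - F i x'| < e.

(* Predictor sequence of the filter along the fixed measurement sequence y:
   pi_{0-} = mu,  pi_n = upd n (y n) pi_{n-}  (measurement update),
   pi_{(n+1)-}(A) = \int T(A | x) pi_n(dx)  (prediction step). *)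
Definition predictor_seq (d : measure_display) (dY : measure_display)
  (R : realType) (X : measurableType d) (Y : measurableType dY)
  (T : R.-pker X ~> X) (mu : probability X R)
  (upd : nat -> Y -> probability X R -> probability X R) (y : nat -> Y)
  (pred : nat -> probability X R) : Prop :=
  pred 0%N = mu /\
  forall n A, measurable A ->
    pred n.+1 A = (\int[upd n (y n) (pred n)]_x T x A)%E.

(* The density of the predictor at time n+1 is the mixture
   z |-> \int t(z|x) pi_n(dx) of the kernel densities against the filter pi_n.
   It is bounded by the bound of t, and since the t(.|x) are equicontinuous its
   modulus of continuity does not depend on the mixing measure pi_n.
   That it is a density of \int T(.|x) pi_n(dx) is Tonelli's theorem, but
   lambda need not be sigma-finite nor t jointly measurable.  Off the locally
   finite points t vanishes (a positive value would spread over a ball of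
   infinite measure, while T <= 1), and the locally null points form a null set
   by separability.  On the remaining regular points lambda is sigma-finite,
   x |-> t(z|x) is measurable as the limit of the ball averages
   T(B|x)/lambda(B), and continuity in z then gives joint measurability. *)

From HB Require Import structures.
From mathcomp Require Import all_boot all_order all_algebra.
From mathcomp Require Import all_classical all_reals all_analysis.
From mathcomp Require Import measurable_realfun.
From mathcomp Require Import lra.
Import HBNNSimple.
Import Order.TTheory GRing.Theory Num.Theory.
Import numFieldNormedType.Exports.
Local Open Scope classical_set_scope.
Local Open Scope ring_scope.

Lemma measurable_cst_prop d (T : measurableType d) (p : Prop) :
  measurable [set _ : T | p].
Proof.
by have [/propT->|/propF->] := pselect p; [exact: measurableT|exact: measurable0].
Qed.

Section integral_tools.
Context {d : measure_display} {T : measurableType d} {R : realType}.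
Local Open Scope ereal_scope.

Lemma integral_set_indic (mu : {measure set T -> \bar R}) (A : set T) (f : T -> R) :
  \int[mu]_(x in A) (f x)%:E = \int[mu]_x (f x * \1_A x)%:E.
Proof.
rewrite integral_mkcond; apply: eq_integral => x _.
by rewrite /patch indicE; case: (x \in A); rewrite ?mulr1 ?mulr0.
Qed.

Lemma integral_mrestr (mu : {measure set T -> \bar R}) (S : set T)
    (mS : measurable S) (f : T -> \bar R) (A : set T) : measurable A ->
  (forall x, 0 <= f x) -> measurable_fun setT f -> (forall x, ~ S x -> f x = 0) ->
  \int[mu]_(x in A) f x = \int[mrestr mu mS]_(x in A) f x.
Proof.
move=> mA f0 mf f_off.
have mAS := measurableI _ _ mA mS.
have mAnS := measurableI _ _ mA (measurableC mS).
have disj : [disjoint A `&` S & A `&` ~` S] by apply/disj_setPS => x [[_ ?] [_ ?]].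
have mfA : measurable_fun ((A `&` S) `|` (A `&` ~` S)) f by exact: measurable_funS mf.
have splitA : A = (A `&` S) `|` (A `&` ~` S) by rewrite -setIUr setUCr setIT.
have f_offA (m : {measure set T -> \bar R}) : \int[m]_(x in A `&` ~` S) f x = 0.
  by apply: integral0_eq => x [_ /f_off].
rewrite splitA !ge0_integral_setU // !f_offA !adde0.
apply: eq_measure_integral => B mB BAS.
by rewrite /= /mrestr setIidl // => x /BAS [].
Qed.

Lemma ge0_le_integral_nomeas (mu : {measure set T -> \bar R}) (f g : T -> R) :
  (forall x, (0 <= f x)%R) -> (forall x, (f x <= g x)%R) ->
  \int[mu]_x (f x)%:E <= \int[mu]_x (g x)%:E.
Proof.
move=> f0 fg; have g0 x : (0 <= g x)%R by exact: le_trans (f0 x) (fg x).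
rewrite !ge0_integralTE ?lee_fin //; apply: ereal_sup_le => _ [h hf <-].
by exists h => //= x; apply: le_trans (hf x) _; rewrite lee_fin.
Qed.

Lemma le_integral_shift (P : probability T R) (f g : T -> R) (c : R) :
  (forall x, (0 <= f x)%R) -> (forall x, (0 <= g x)%R) -> (0 <= c)%R ->
  (forall x, (f x <= g x + c)%R) ->
  \int[P]_x (f x)%:E <= \int[P]_x (g x)%:E + c%:E.
Proof.
move=> f0 g0 c0 fgc; rewrite [leLHS]ge0_integralTE ?lee_fin //.
apply: ge_ereal_sup => _ [h hf <-] /=; rewrite -integralT_nnsfun.
(* for a simple [h <= f], [(h - c)^+] is a measurable minorant of [g] and
   [h <= (h - c)^+ + c] *)
pose k := ((fun x => h x - c) ^\+)%R.
have k0 x : (0 <= k x)%R by rewrite /k /funrpos le_max lexx orbT.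
have mk : measurable_fun setT k.
  exact/measurable_funrpos/measurable_funB/measurable_cst.
apply: (@le_trans _ _ (\int[P]_x ((k x)%:E + c%:E))).
  apply: ge0_le_integral => //.
  - by move=> x _; rewrite lee_fin.
  - exact/measurable_EFinP.
  - exact/emeasurable_funD/measurable_cst/measurable_EFinP.
  by move=> x _; rewrite -EFinD lee_fin /k /funrpos -lerBlDr le_max lexx.
rewrite ge0_integralD //; last 2 first.
- by move=> x _; rewrite lee_fin.
- exact/measurable_EFinP.
have P1 : (P : measure T R) [set: T] = 1 by exact: probability_setT.
rewrite integral_cst // P1 mule1 leeD2r //.
apply: ge0_le_integral_nomeas => // x; rewrite /k /funrpos ge_max g0 andbT.
by rewrite lerBlDr; apply: le_trans (fgc x); move: (hf x); rewrite lee_fin.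
Qed.

Lemma average_near (mu : {measure set T -> \bar R}) (B : set T) (f : T -> R)
    (c e : R) : measurable B -> measurable_fun B f ->
  (forall x, B x -> (0 <= f x)%R) -> (forall x, B x -> (`|f x - c| <= e)%R) ->
  mu B != 0 -> mu B < +oo ->
  (`|c - fine (\int[mu]_(x in B) (f x)%:E) / fine (mu B)| <= e)%R.
Proof.
move=> mB mf f0 fce muB0 muBoo.
have muBE : mu B = (fine (mu B))%:E by rewrite fineK // ge0_fin_numE.
have l0 : (0 < fine (mu B))%R.
  by rewrite lt0r fine_ge0 // andbT; apply: contra muB0 => /eqP l0; rewrite muBE l0.
have mfE : measurable_fun B (EFin \o f) by exact/measurable_EFinP.
have f_le x : B x -> (f x <= c + e)%R.
  by move=> /fce; rewrite ler_distl => /andP[].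
have f_ge x : B x -> (c - e <= f x)%R.
  by move=> /fce; rewrite ler_distl => /andP[].
have int_le : \int[mu]_(x in B) (f x)%:E <= ((c + e) * fine (mu B))%:E.
  by rewrite EFinM -muBE -integral_cst //; apply: ge0_le_integral.
have int_ge0 : 0 <= \int[mu]_(x in B) (f x)%:E.
  by apply: integral_ge0 => x /f0; rewrite lee_fin.
have intE : \int[mu]_(x in B) (f x)%:E = (fine (\int[mu]_(x in B) (f x)%:E))%:E.
  by rewrite fineK // ge0_fin_numE // (le_lt_trans int_le) ?ltry.
have int_ge : ((c - e) * fine (mu B) <= fine (\int[mu]_(x in B) (f x)%:E))%R.
  have [ce0|ce0] := leP (c - e)%R 0%R.
    by apply: le_trans (fine_ge0 int_ge0); rewrite pmulr_lle0.
  rewrite -lee_fin -intE EFinM -muBE -integral_cst //.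
  by apply: ge0_le_integral => // x _; rewrite lee_fin ltW.
move: int_le; rewrite intE lee_fin => int_le.
by rewrite (@ler_distlC _ c) /= ler_pdivlMr // ler_pdivrMr // int_ge int_le.
Qed.
End integral_tools.

Lemma unif_bounded_comp (R : realType) (I J X : Type) (F : I -> X -> R)
  (h : J -> I) : unif_bounded F -> unif_bounded (F \o h).
Proof. by move=> [M F_le]; exists M => j; exact: F_le. Qed.

Section polish_state_space.
Context {d : measure_display} {R : realType} {X : measurableType d}
  (dist : X -> X -> R).
Hypothesis Xpolish : polish_borel dist.

Lemma distxx x : dist x x = 0.
Proof. by case: Xpolish => -[_ dist0 _ _] _ _ _; apply/dist0. Qed.

Lemma distC x y : dist x y = dist y x.
Proof. by case: Xpolish => -[]. Qed.

Lemma dist_triangle x y z : dist x z <= dist x y + dist y z.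
Proof. by case: Xpolish => -[]. Qed.

Lemma measurable_dball z r : measurable (dball dist z r).
Proof.
by case: Xpolish => _ _ _ borel; apply/borel; apply: sub_sigma_algebra; exists z, r.
Qed.

Definition dense_seq : nat -> X :=
  projT1 (cid (let: And4 _ _ separable _ := Xpolish in separable)).

Lemma dense_seqP x e : 0 < e -> exists n, dist x (dense_seq n) < e.
Proof. by rewrite /dense_seq; case: cid => s s_dense /=; exact: s_dense. Qed.

Definition base_ball (i : nat) : set X :=
  let: (j, k) := odflt (0, 0)%N (unpickle i) in
  dball dist (dense_seq j) k.+1%:R^-1.

Lemma measurable_base_ball i : measurable (base_ball i).
Proof. by rewrite /base_ball; case: (odflt _ _) => j k; exact: measurable_dball. Qed.

Lemma base_ball_sub_dball z r : 0 < r ->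
  exists i, base_ball i z /\ base_ball i `<=` dball dist z r.
Proof.
move=> r0; have [N _ /(_ N (leqnn N)) N_lt] :=
  near_infty_natSinv_lt (PosNum (divr_gt0 r0 (ltr0n _ 2))).
have [j zj] : exists j, dist z (dense_seq j) < N.+1%:R^-1.
  by apply: dense_seqP; rewrite invr_gt0.
exists (pickle (j, N)); rewrite /base_ball pickleK /=.
split=> [|w jw]; first by rewrite /dball /= distC.
rewrite /dball /= (splitr r); apply: le_lt_trans (dist_triangle z (dense_seq j) w) _.
by apply: ltrD; apply: lt_trans N_lt.
Qed.

Lemma dball_sub_base_ball i z : base_ball i z ->
  exists2 r, 0 < r & dball dist z r `<=` base_ball i.
Proof.
rewrite /base_ball; case: (odflt _ _) => j k /= zjk.
exists (k.+1%:R^-1 - dist (dense_seq j) z); first by rewrite subr_gt0.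
move=> w /= zw; apply: le_lt_trans (dist_triangle _ z w) _.
by rewrite -ltrBrDl.
Qed.

Definition locally (P : set X -> Prop) : set X :=
  [set z | exists2 r, 0 < r & P (dball dist z r)].

Section locally.
Variable P : set X -> Prop.
Hypothesis P_sub : forall A B, measurable A -> measurable B -> A `<=` B -> P B -> P A.

Lemma locally_bigcup :
  locally P = \bigcup_i (base_ball i `&` [set _ | P (base_ball i)]).
Proof.
apply/seteqP; split => z /=.
  move=> [r r0 Pr]; have [i [zi ir]] := base_ball_sub_dball z r r0.
  exists i => //; split => //.
  exact: P_sub (measurable_base_ball i) (measurable_dball z r) ir Pr.
move=> [i _ [zi Pi]]; have [r r0 ri] := dball_sub_base_ball i z zi.
exists r => //; exact: P_sub (measurable_dball z r) (measurable_base_ball i) ri Pi.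
Qed.

Lemma measurable_locally : measurable (locally P).
Proof.
rewrite locally_bigcup; apply: bigcupT_measurable => i.
exact: measurableI (measurable_base_ball i) (measurable_cst_prop _ _ _).
Qed.
End locally.

Lemma measurable_open U :
  (forall z, U z -> exists2 r, 0 < r & dball dist z r `<=` U) -> measurable U.
Proof.
move=> U_open; rewrite (_ : U = locally (fun B => B `<=` U)).
  by apply: measurable_locally => A B _ _; exact: subset_trans.
apply/seteqP; split=> [z /U_open //|z [r r0]]; apply.
by rewrite /dball /= distxx.
Qed.

Definition dist_continuous (f : X -> R) := forall z e, 0 < e ->
  exists2 del, 0 < del & forall w, dist w z < del -> `|f w - f z| < e.

Lemma equicont_continuous (I : Type) (F : I -> X -> R) :
  equicont dist F -> forall i, dist_continuous (F i).
Proof.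
by move=> F_equi i z e /(F_equi z)[del del0 F_del]; exists del => // w /F_del.
Qed.

Lemma equicont_comp (I J : Type) (F : I -> X -> R) (h : J -> I) :
  equicont dist F -> equicont dist (F \o h).
Proof.
move=> F_equi z e /(F_equi z)[del del0 F_del].
by exists del => // w /F_del F_wz j; exact: F_wz.
Qed.

Lemma measurable_fun_dist_continuous f :
  dist_continuous f -> measurable_fun setT f.
Proof.
move=> f_cont; apply: (measurability _ (RGenInftyO.measurableE R)) => //.
move=> _ [_ [a ->] <-]; rewrite setTI; apply: measurable_open => z /=.
rewrite in_itv /= => fza.
have [del del0 f_del] := f_cont z (a - f z) ltac:(by rewrite subr_gt0).
exists del => // w; rewrite /dball /= distC => /f_del.
by rewrite in_itv /= ltr_norml => /andP[_]; rewrite ltrBrDr subrK.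
Qed.

Lemma separable_subset (D : set X) : exists s : nat -> X,
  forall z e, D z -> 0 < e -> exists2 i, D (s i) & dist z (s i) < e.
Proof.
have pick_in i : exists w,
    (exists w', D w' /\ base_ball i w') -> D w /\ base_ball i w.
  have [[w Dw]|nex] := pselect (exists w, D w /\ base_ball i w).
    by exists w.
  by exists point => /nex.
have [s sP] := choice pick_in; exists s => z e Dz e0.
have [i [zi ie]] := base_ball_sub_dball z e e0.
by have [Dsi /ie] := sP i (ex_intro _ z (conj Dz zi)); exists i.
Qed.

Section caratheodory.
Context {dW : measure_display} {W : measurableType dW} (g : W -> X -> R)
  (D : set X).
Hypotheses (mD : measurable D)
  (g_meas : forall z, D z -> measurable_fun setT (g ^~ z))
  (g_cont : forall w, dist_continuous (g w)).

Let s : nat -> X := projT1 (cid (separable_subset D)).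
Let s_dense z e : D z -> 0 < e -> exists2 i, D (s i) & dist z (s i) < e.
Proof. by rewrite /s; case: cid => s' s'_dense /=; exact: s'_dense. Qed.

Let near_set k i := [set z | D (s i) /\ dist z (s i) < k.+1%:R^-1].

Let measurable_near_set k i : measurable (near_set k i).
Proof.
rewrite (_ : near_set k i = [set _ | D (s i)] `&` dball dist (s i) k.+1%:R^-1).
  exact: measurableI (measurable_cst_prop _ _ _) (measurable_dball _ _).
by apply/seteqP; split => z [Dsi]; rewrite /dball /= distC.
Qed.

Let nearest k z : nat :=
  if pselect (exists i, `[< near_set k i z >]) is left ex then ex_minn ex else 0.

Let nearestP k z : D z ->
  near_set k (nearest k z) z /\ forall i, (i < nearest k z)%N -> ~ near_set k i z.
Proof.
move=> Dz; rewrite /nearest; case: pselect => [ex|nex].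
  case: ex_minnP => m /asboolP m_near m_min; split => // i im /asboolP /m_min.
  by rewrite leqNgt im.
have [i Dsi zi] : exists2 i, D (s i) & dist z (s i) < k.+1%:R^-1.
  by apply: s_dense; rewrite ?invr_gt0.
by exfalso; apply: nex; exists i; apply/asboolP.
Qed.

Let cell k m := D `&` [set z | nearest k z = m].

Let measurable_cell k m : measurable (cell k m).
Proof.
rewrite (_ : cell k m = D `&` near_set k m `&` \bigcap_(i in `I_m) ~` near_set k i).
  apply: measurableI; first exact: measurableI.
  by apply: bigcap_measurableType => i _; exact: measurableC.
apply/seteqP; split => z /=.
  move=> [Dz <-]; have [near_z min_z] := nearestP k z Dz.
  by split; [split|move=> i /min_z].
move=> [[Dz zm] zlt]; split; first exact: Dz.
have [near_z min_z] := nearestP k z Dz.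
have {}zlt i : (i < m)%N -> ~ near_set k i z by exact: zlt.
have [/min_z //|] := ltnP m (nearest k z).
rewrite leq_eqVlt => /predU1P[//|/zlt //].
Qed.

Let approx k (p : W * X) := g p.1 (s (nearest k p.2)) * \1_D p.2.

Let measurable_approx k : measurable_fun setT (approx k).
Proof.
have cover : [set: W * X] = (setT `*` ~` D) `|` \bigcup_m (setT `*` cell k m).
  apply/seteqP; split => -[w z] // _.
  by have [Dz|nDz] := pselect (D z); [right; exists (nearest k z)|left].
have mcell m : measurable ([set: W] `*` cell k m).
  by apply: measurableX => //; exact: measurable_cell.
rewrite cover measurable_funU; last 2 first.
- exact: measurableX (measurableC mD).
- exact: bigcupT_measurable.
split.
  apply: (eq_measurable_fun (cst (0 : R))); last exact: measurable_cst.
  move=> [w z] /set_mem [_ /= nDz].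
  by rewrite /approx /= indicE memNset // mulr0.
apply/measurable_fun_bigcup => // m.
have [Dsm|nDsm] := pselect (D (s m)).
  apply: (eq_measurable_fun (fun p => g p.1 (s m))).
    move=> [w z] /set_mem [_ [/= Dz zm]].
    by rewrite /approx /= zm indicE mem_set // mulr1.
  apply: measurable_funS (measurableT : measurable [set: W * X]) _ _ => //.
  exact: measurableT_comp (g_meas _ Dsm) measurable_fst.
rewrite (_ : setT `*` cell k m = set0); first exact: measurable_fun_set0.
apply/seteqP; split => -[w z] // [_ [Dz zm]]; apply: nDsm.
by have [[]] := nearestP k z Dz; rewrite zm.
Qed.

Let approx_cvg p : approx ^~ p @ \oo --> g p.1 p.2 * \1_D p.2.
Proof.
case: p => w z; rewrite /approx /= indicE.
have [Dz|nDz] := boolP (z \in D); last first.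
  by rewrite mulr0; under eq_fun do rewrite mulr0; exact: cvg_cst.
rewrite mulr1; under eq_fun do rewrite mulr1.
apply/cvgrPdist_lt => e e0; have [del del0 g_del] := g_cont w z e e0.
near=> k; rewrite distrC; apply: g_del; rewrite distC.
have [[_ zk] _] := nearestP k z (set_mem Dz); apply: lt_trans zk _.
by near: k; exact: near_infty_natSinv_lt (PosNum del0).
Unshelve. all: by end_near. Qed.

Lemma measurable_caratheodory :
  measurable_fun setT (fun p : W * X => g p.1 p.2 * \1_D p.2).
Proof. exact: measurable_fun_cvg measurable_approx (fun p _ => approx_cvg p). Qed.
End caratheodory.

Section regular_points.
Variable lam : {measure set X -> \bar R}.
Local Open Scope ereal_scope.

Definition locally_null := locally lam.-negligible.
Definition locally_finite := locally (fun B => lam B < +oo).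
Definition regular := ~` locally_null `&` locally_finite.

Let null_sub A B : measurable A -> measurable B -> A `<=` B ->
  lam.-negligible B -> lam.-negligible A.
Proof. by move=> _ _; exact: negligibleS. Qed.

Let finite_sub A B : measurable A -> measurable B -> A `<=` B ->
  lam B < +oo -> lam A < +oo.
Proof. by move=> mA mB AB; apply: le_lt_trans; apply: le_measure; rewrite ?inE. Qed.

Lemma measurable_regular : measurable regular.
Proof.
apply: measurableI; first exact/measurableC/measurable_locally.
exact: measurable_locally.
Qed.

Lemma negligible_locally_null : lam.-negligible locally_null.
Proof.
rewrite /locally_null locally_bigcup //; apply: negligible_bigcup => i.
have [null_i|not_null_i] := pselect (lam.-negligible (base_ball i)).
  by apply: negligibleS null_i => z [].
rewrite (_ : _ `&` _ = set0); first exact: negligible_set0.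
by apply/seteqP; split=> z // -[_ /not_null_i].
Qed.

Lemma regular_dball_neq0 z r : regular z -> (0 < r)%R -> lam (dball dist z r) != 0.
Proof.
move=> [not_null _] r0; apply/negP => /eqP ball0; apply: not_null.
by exists r => //; exists (dball dist z r); split => //; exact: measurable_dball.
Qed.

Lemma dball_not_locally_finite z r : ~ locally_finite z -> (0 < r)%R ->
  lam (dball dist z r) = +oo.
Proof.
move=> not_fin r0; apply/eqP; rewrite eq_le leey /= leNgt; apply/negP => ball_fin.
by apply: not_fin; exists r.
Qed.

Lemma sigma_finite_regular : sigma_finite setT (mrestr lam measurable_regular).
Proof.
pose F i := base_ball i `&` [set _ | lam (base_ball i) < +oo] `|` ~` regular.
have mF i : measurable (F i).
  apply: measurableU; last exact/measurableC/measurable_regular.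
  exact: measurableI (measurable_base_ball i) (measurable_cst_prop _ _ _).
exists F.
  apply/seteqP; split => z // _.
  have [[_ fin_z]|] := pselect (regular z); last by exists 0%N => //; right.
  move: fin_z; rewrite /locally_finite locally_bigcup // => -[i _ iz].
  by exists i => //; left.
move=> i; split => //; rewrite /mrestr.
have [fin_i|inf_i] := pselect (lam (base_ball i) < +oo).
  apply: le_lt_trans fin_i; apply: le_measure; rewrite ?inE //.
  - exact: measurableI (mF i) measurable_regular.
  - exact: measurable_base_ball.
  by move=> z [[[]|]].
rewrite (_ : _ `&` _ = set0) ?measure0 //.
by apply/seteqP; split => z // -[[[_ /inf_i]|]].
Qed.

Definition lam_regular : {sigma_finite_measure set X -> \bar R} :=
  HB.pack_for (SigmaFiniteMeasure.type X R) (mrestr lam measurable_regular)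
    (isSFinite.Build _ _ _ (mrestr lam measurable_regular)
       (sfinite_measure_sigma_finite sigma_finite_regular))
    (isSigmaFinite.Build _ _ _ (mrestr lam measurable_regular)
       sigma_finite_regular).

Lemma integral_lam_regular (h : X -> R) (A : set X) : measurable A ->
  (forall z, 0 <= h z)%R -> measurable_fun setT h ->
  (forall z, ~ locally_finite z -> h z = 0%R) ->
  \int[lam]_(z in A) (h z)%:E = \int[lam_regular]_(z in A) (h z * \1_regular z)%:E.
Proof.
move=> mA h0 mh h_off.
have mhr : measurable_fun setT (fun z => h z * \1_regular z)%R.
  exact/measurable_funM/measurable_indic/measurable_regular.
transitivity (\int[lam]_(z in A) (h z * \1_regular z)%:E).
  apply: ae_eq_integral => //; try exact/measurable_EFinP/measurable_funS/mhr.
  - exact/measurable_EFinP/measurable_funS/mh.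
  (* off the regular points, [h] vanishes or the point is locally null *)
  apply: negligibleS negligible_locally_null => z /= eq_z.
  apply: contra_notP eq_z => not_null _; rewrite indicE.
  have [reg_z|not_reg_z] := boolP (z \in regular); first by rewrite mulr1.
  rewrite mulr0 h_off // => fin_z.
  by move/negP: not_reg_z; apply; apply/mem_set; split.
apply: integral_mrestr => // [z||z not_reg_z].
- by rewrite lee_fin mulr_ge0.
- exact/measurable_EFinP.
- by rewrite indicE memNset // mulr0.
Qed.
End regular_points.

Section kernel_mixture.
Variables (lam : {measure set X -> \bar R}) (T : R.-pker X ~> X)
  (t : X -> X -> R) (M : R).
Hypotheses (t_density : kernel_density lam T t) (t_le : forall z x, t z x <= M)
  (t_equicont : equicont dist (fun x z => t z x)).

Lemma density_ge0 z x : 0 <= t z x.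
Proof. by case: (t_density x). Qed.

Lemma measurable_density x : measurable_fun setT (t ^~ x).
Proof. by case: (t_density x). Qed.

Lemma kernelE x A : measurable A -> T x A = (\int[lam]_(y in A) (t y x)%:E)%E.
Proof. by case: (t_density x) => _ _; apply. Qed.

Lemma density_eq0 z x : ~ locally_finite lam z -> t z x = 0.
Proof.
move=> not_fin; apply/eqP; rewrite eq_le density_ge0 andbT leNgt; apply/negP => tz0.
have [del del0 t_del] := t_equicont z _ (divr_gt0 tz0 (ltr0n _ 2)).
have mB := measurable_dball z del.
have T_le1 : (T x (dball dist z del) <= 1)%E.
  by rewrite -(@prob_kernel _ _ _ _ _ T x); apply: le_measure; rewrite ?inE.
have : ((t z x / 2)%:E * lam (dball dist z del) <= T x (dball dist z del))%E.
  rewrite kernelE // -integral_cst //; apply: ge0_le_integral => //.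
  - by move=> y _; rewrite lee_fin divr_ge0 // ltW.
  - exact/measurable_EFinP/measurable_funS/measurable_density.
  move=> y; rewrite /dball /= distC => /t_del/(_ x); rewrite lee_fin ltr_distl.
  by move=> /andP[+ _] => /ltW; apply: le_trans; lra.
rewrite dball_not_locally_finite // gt0_muley ?lte_fin ?divr_gt0 //.
by rewrite leye_eq => /eqP Too; move: T_le1; rewrite Too leNgt ltey.
Qed.

Lemma measurable_density_regular z : regular lam z -> measurable_fun setT (t z).
Proof.
move=> reg_z; have [_ [r r0 Br_fin]] := reg_z.
pose B (k : nat) := dball dist z (r / k.+1%:R).
have mB k : measurable (B k) by exact: measurable_dball.
have B_fin k : (lam (B k) < +oo)%E.
  apply: le_lt_trans Br_fin; apply: le_measure; rewrite ?inE //.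
    exact: measurable_dball.
  move=> w; rewrite /B /dball /= => /lt_le_trans; apply.
  by rewrite ler_pdivrMr // ler_peMr ?ler1n // ltW.
apply: (measurable_fun_cvg (h := fun k x => fine (T x (B k)) / fine (lam (B k))))
  => [k|x _].
  apply: measurable_funM; last exact: measurable_cst.
  exact: measurableT_comp (fine_measurable measurableT) (measurable_kernel T _ (mB k)).
apply/cvgrPdist_le => e e0; have [del del0 t_del] := t_equicont z e e0.
near=> k; rewrite kernelE //; apply: average_near => //.
- exact/measurable_funS/measurable_density.
- by move=> y _; exact: density_ge0.
- move=> y; rewrite /B /dball /= distC => zy; apply/ltW/t_del/(lt_trans zy).
  rewrite mulrC -ltr_pdivlMr //.
  by near: k; exact: near_infty_natSinv_lt (PosNum (divr_gt0 del0 r0)).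
- by apply: regular_dball_neq0 => //; rewrite divr_gt0.
Unshelve. all: by end_near. Qed.

Lemma measurable_density_joint :
  measurable_fun setT (fun p : X * X => t p.2 p.1 * \1_(regular lam) p.2).
Proof.
apply: (measurable_caratheodory (fun x z => t z x) _ (measurable_regular lam)).
  exact: measurable_density_regular.
exact: equicont_continuous t_equicont.
Qed.

(* [t z] need not be measurable for non-regular [z]: the bounds below hold for
   the integral as a supremum over simple functions regardless *)
Definition mixture (P : probability X R) z := fine (\int[P]_x (t z x)%:E).

Let M_ge0 : 0 <= M. Proof. exact: le_trans (density_ge0 point point) (t_le _ _). Qed.

Lemma integral_density_bounds (P : probability X R) z :
  (0 <= \int[P]_x (t z x)%:E <= M%:E)%E.
Proof.
apply/andP; split; first by apply: integral_ge0 => x _; rewrite lee_fin density_ge0.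
have := le_integral_shift P _ _ _ (density_ge0 z) (fun _ => lexx 0) M_ge0.
rewrite integral0 add0e; apply => x; rewrite add0r; exact: t_le.
Qed.

Lemma mixtureE (P : probability X R) z : (\int[P]_x (t z x)%:E = (mixture P z)%:E)%E.
Proof.
have /andP[int_ge0 int_le] := integral_density_bounds P z.
by rewrite fineK // ge0_fin_numE // (le_lt_trans int_le) ?ltry.
Qed.

Lemma mixture_ge0 (P : probability X R) z : 0 <= mixture P z.
Proof. by have /andP[] := integral_density_bounds P z; rewrite mixtureE lee_fin. Qed.

Lemma mixture_le (P : probability X R) z : mixture P z <= M.
Proof. by have /andP[_] := integral_density_bounds P z; rewrite mixtureE lee_fin. Qed.

Lemma mixture_eq0 (P : probability X R) z : ~ locally_finite lam z -> mixture P z = 0.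
Proof.
move=> not_fin; rewrite /mixture (eq_integral (fun _ => 0%E)) ?integral0 //.
by move=> x _; rewrite density_eq0.
Qed.

Lemma mixture_lipschitz (P : probability X R) w z e : 0 <= e ->
  (forall x, `|t w x - t z x| <= e) -> `|mixture P w - mixture P z| <= e.
Proof.
move=> e0 t_wz.
have le_shift u v : (forall x, t u x <= t v x + e) -> mixture P u <= mixture P v + e.
  move=> uv; rewrite -lee_fin EFinD -!mixtureE.
  exact: le_integral_shift P _ _ _ (density_ge0 u) (density_ge0 v) e0 uv.
rewrite ler_distl lerBlDr; apply/andP.
by split; apply: le_shift => x; have := t_wz x; rewrite ler_distl lerBlDr => /andP[].
Qed.

Lemma equicont_mixture : equicont dist mixture.
Proof.
move=> z e e0; have [del del0 t_del] := t_equicont z _ (divr_gt0 e0 (ltr0n _ 2)).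
exists del => // w wz P.
have : `|mixture P w - mixture P z| <= e / 2.
  by apply: mixture_lipschitz => [|x]; [rewrite divr_ge0 // ltW|exact/ltW/t_del].
lra.
Qed.

Lemma unif_bounded_mixture : unif_bounded mixture.
Proof. by exists M => P z; rewrite ger0_norm ?mixture_ge0 ?mixture_le. Qed.

Lemma measurable_mixture (P : probability X R) : measurable_fun setT (mixture P).
Proof. exact/measurable_fun_dist_continuous/equicont_continuous/equicont_mixture. Qed.

Lemma mixture_density (P : probability X R) A : measurable A ->
  (\int[P]_x T x A = \int[lam]_(z in A) (mixture P z)%:E)%E.
Proof.
move=> mA.
pose f (p : X * X) := t p.2 p.1 * \1_(regular lam) p.2 * \1_A p.2.
have mf : measurable_fun setT f.
  apply: measurable_funM; first exact: measurable_density_joint.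
  exact: measurableT_comp (measurable_indic mA) measurable_snd.
have f0 p : (0 <= (f p)%:E)%E.
  by rewrite lee_fin /f !indicE !mulr_ge0 ?density_ge0.
have kernel_f x : T x A = (\int[lam_regular lam]_z (f (x, z))%:E)%E.
  rewrite kernelE // integral_lam_regular //; last 3 first.
  - by move=> z; exact: density_ge0.
  - exact: measurable_density.
  - by move=> z; exact: density_eq0.
  by rewrite integral_set_indic.
have mixture_f z : (\int[P]_x (f (x, z))%:E =
    (mixture P z * \1_(regular lam) z * \1_A z)%:E)%E.
  rewrite /f /= !indicE; case: (z \in regular lam); case: (z \in A);
    under eq_integral do rewrite ?mulr1 ?mulr0;
    by rewrite ?mulr1 ?mulr0 ?mixtureE ?integral0.
transitivity (\int[P]_x \int[lam_regular lam]_z (f (x, z))%:E)%E.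
  by apply: eq_integral => x _; rewrite kernel_f.
rewrite (fubini_tonelli (fun p => (f p)%:E)) //; last exact/measurable_EFinP.
rewrite integral_lam_regular //; last 3 first.
- exact: mixture_ge0.
- exact: measurable_mixture.
- by move=> z; exact: mixture_eq0.
by rewrite integral_set_indic; apply: eq_integral => z _; rewrite mixture_f.
Qed.

Lemma predictor_density_family (dY : measure_display) (Y : measurableType dY)
    (upd : nat -> Y -> probability X R -> probability X R) (y : nat -> Y)
    (mu : probability X R) (pred : nat -> probability X R) :
  predictor_seq T mu upd y pred ->
  exists f : nat -> X -> R,
    (forall n, (0 < n)%N -> is_density lam (pred n) (f n)) /\
    unif_bounded (fun n : {n : nat | (0 < n)%N} => f (sval n)) /\
    equicont dist (fun n : {n : nat | (0 < n)%N} => f (sval n)).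
Proof.
move=> [_ pred_succ].
pose update n := upd n.-1 (y n.-1) (pred n.-1).
exists (fun n => mixture (update n)); split; [|split].
- case=> // n _; split; [exact: measurable_mixture|exact: mixture_ge0|].
  by move=> A mA; rewrite pred_succ // mixture_density.
- exact: unif_bounded_comp unif_bounded_mixture.
- exact: equicont_comp equicont_mixture.
Qed.
End kernel_mixture.
End polish_state_space.

Theorem lemma4 (d dY : measure_display) (R : realType)
  (X : measurableType d) (Y : measurableType dY) (dist : X -> X -> R)
  (lam : {measure set X -> \bar R}) (T : R.-pker X ~> X) (t : X -> X -> R)
  (upd : nat -> Y -> probability X R -> probability X R)
  (mu nu : probability X R) (y : nat -> Y)
  (predmu prednu : nat -> probability X R) :
  polish_borel dist ->
  kernel_density lam T t ->
  unif_bounded (fun x z => t z x) ->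
  equicont dist (fun x z => t z x) ->
  predictor_seq T mu upd y predmu ->
  predictor_seq T nu upd y prednu ->
  (exists fmu : nat -> X -> R,
     (forall n, (0 < n)%N -> is_density lam (predmu n) (fmu n)) /\
     unif_bounded (fun n : {n : nat | (0 < n)%N} => fmu (sval n)) /\
     equicont dist (fun n : {n : nat | (0 < n)%N} => fmu (sval n))) /\
  (exists fnu : nat -> X -> R,
     (forall n, (0 < n)%N -> is_density lam (prednu n) (fnu n)) /\
     unif_bounded (fun n : {n : nat | (0 < n)%N} => fnu (sval n)) /\
     equicont dist (fun n : {n : nat | (0 < n)%N} => fnu (sval n))).
Proof.
move=> Xpolish t_density [M t_bounded] t_equicont mu_pred nu_pred.
have t_le z x : t z x <= M := le_trans (ler_norm _) (t_bounded x z).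
have family := predictor_density_family _ Xpolish _ _ _ _ t_density t_le t_equicont.
by split; [exact: family mu_pred|exact: family nu_pred].
Qed.
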